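(* Let $R$ be a monad on Sets and $LM$ a left $R$-module with values in Sets. A pair of subsets $C\subset\coprod_{n\ge0}\prod_{i=0}^{n-1}LM([i])$ and $\widetilde{C}\subset\coprod_{n\ge0}(\prod_{i=0}^{n}LM([i]))\times R([n])$ corresponds to a C-subsystem of $CC(R,LM)$ (i.e. there is a C-subsystem $CC$ with $Ob(CC)=C$ and $\widetilde{Ob}(CC)=\widetilde{C}$) if and only if the following conditions hold, for all sequences and elements for which the expressions are well formed (with $n=l(\Gamma)$ throughout): (1) $(\rhd_C)$, i.e. the empty sequence is in $C$; (2) $(\Gamma,T\rhd_C)\Rightarrow(\Gamma\rhd_C)$; (3) $(\Gamma\vdash_{\widetilde C}r:R)\Rightarrow(\Gamma,R\rhd_C)$; (4) $(\Gamma,T\rhd_C)\wedge(\Gamma,\Delta\vdash_{\widetilde C}r:R)\Rightarrow(\Gamma,T,t_{n+1}(\Delta)\vdash_{\widetilde C}t_{n+1}(r):t_{n+1}(R))$; (5) $(\Gamma\vdash_{\widetilde C}s:S)\wedge(\Gamma,S,\Delta\vdash_{\widetilde C}r:R)\Rightarrow(\Gamma,s_{n+1}(\Delta[s/n+1])\vdash_{\widetilde C}s_{n+1}(r[s/n+1]):s_{n+1}(R[s/n+1]))$; (6) $(\Gamma,T\rhd_C)\Rightarrow(\Gamma,T\vdash_{\widetilde C}n+1:t_{n+1}(T))$.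
   Context: Notation: $[n]=\{1,\dots,n\}$. $R$ is a monad on Sets given by $\eta_X:X\to R(X)$ and $\mathrm{bind}(f):R(X)\to R(Y)$ for $f:X\to R(Y)$ (with $\mathrm{bind}(\eta_X)=\mathrm{id}$, $\mathrm{bind}(f)\circ\eta_X=f$, $\mathrm{bind}(\mathrm{bind}(g)\circ f)=\mathrm{bind}(g)\circ\mathrm{bind}(f)$); $LM$ is a left $R$-module: a functor with maps $\rho(f):LM(X)\to LM(Y)$, $\rho(\eta_X)=\mathrm{id}$, $\rho(g)\circ\rho(f)=\rho(\mathrm{bind}(g)\circ f)$. Elements of $Y$ are regarded in $R(Y)$ via $\eta_Y$. For $E\in LM([m])$ (resp. $R([m])$), $E(f_1/1,\dots,f_m/m)$ means $\rho(f)(E)$ (resp. $\mathrm{bind}(f)(E)$) with $f(i)=f_i$. For $E\in LM([m])$ or $R([m])$ with $m\ge n$: $t_{n+1}(E):=E(1/1,\dots,n/n,n+2/n+1,\dots,m+1/m)\in LM([m+1])$ (resp. $R([m+1])$). For $m\ge n+1$ and $s\in R([n])$ (regarded in $R([m-1])$ via $[n]\subset[m-1]$): $s_{n+1}(E[s/n+1]):=E(1/1,\dots,n/n,s/n+1,n+1/n+2,\dots,m-1/m)\in LM([m-1])$ (resp. $R([m-1])$). These are applied componentwise to sequences $\Delta=(D_1,\dots,D_k)$. $CC(R,LM)$: objects are sequences $\Gamma=(T_1,\dots,T_n)$ with $T_i\in LM([i-1])$, $l(\Gamma)=n$, $ft(T_1,\dots,T_n)=(T_1,\dots,T_{n-1})$,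 $pt=()$; morphisms $(E_1,\dots,E_m)\to(T_1,\dots,T_n)$ are elements of $R([m])^n$, the composite of $f=(f_1,\dots,f_n)$ followed by $g=(g_1,\dots,g_k)$ being $(g_j(f_1/1,\dots,f_n/n))_j$, identities $(1,\dots,n)$; $p_X=(1,\dots,n):(T_1,\dots,T_{n+1})\to(T_1,\dots,T_n)$; for $X=(T_1,\dots,T_{n+1})$ and $f=(f_1,\dots,f_n):(R_1,\dots,R_m)\to ft(X)$, $f^*X=(R_1,\dots,R_m,T_{n+1}(f_1/1,\dots,f_n/n))$ and $q(f,X)=(f_1,\dots,f_n,m+1)$. $\widetilde{Ob}$ of a subcategory is its set of morphisms $s:ft(X)\to X$ with $l(X)>0$, $p_X\circ s=\mathrm{id}$; the section $(1,\dots,n,t):(T_1,\dots,T_n)\to(T_1,\dots,T_n,T)$ ($T\in LM([n])$, $t\in R([n])$) is identified with the sequence $(T_1,\dots,T_n,T,t)$. A C-subsystem of $CC(R,LM)$ is a subcategory $CC$ containing $pt$ such that for every object $X$ of $CC$ with $l(X)>0$: $ft(X)$ and $p_X$ are in $CC$; for every morphism $f:Y\to ft(X)$ of $CC$, $f^*X$ and $q(f,X)$ are in $CC$; and for every morphism $f:Y\to X$ of $CC$ the unique morphism $s_f:Y\to(p_X\circ f)^*X$ with $p\circ s_f=\mathrm{id}_Y$ and $q(p_X\circ f,X)\circ s_f=f$ is in $CC$. Notation: $(T_1,\dots,T_n\rhd_C)$ means $(T_1,\dots,T_n)\in C$; for $\Gamma=(T_1,\dots,T_n)$, $T\in LM([n])$,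 $t\in R([n])$, $(\Gamma\vdash_{\widetilde C}t:T)$ means $(T_1,\dots,T_n,T,t)\in\widetilde C$. Commas denote concatenation of sequences; $\Delta$ may be empty. *)

From mathcomp Require Import all_boot.

Set Implicit Arguments.
Unset Strict Implicit.
Unset Printing Implicit Defensive.

(* Monads on Sets, in Kleisli form (Sets = Type; laws stated pointwise) *)
Record monad := Monad {
  mon :> Type -> Type;
  ret : forall X : Type, X -> mon X;
  bind : forall X Y : Type, (X -> mon Y) -> mon X -> mon Y;
  bind_ret : forall X (x : mon X), bind (@ret X) x = x;
  bind_retr : forall X Y (f : X -> mon Y) (x : X), bind f (ret x) = f x;
  bind_bind : forall X Y Z (f : X -> mon Y) (g : Y -> mon Z) (x : mon X),
      bind (fun a => bind g (f a)) x = bind g (bind f x)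
}.
Arguments ret {m X} x.
Arguments bind {m X Y} f x.

Record lmodule (R : monad) := LModule {
  lmod :> Type -> Type;
  act : forall X Y : Type, (X -> R Y) -> lmod X -> lmod Y;
  act_ret : forall X (E : lmod X), act (@ret R X) E = E;
  act_act : forall X Y Z (f : X -> R Y) (g : Y -> R Z) (E : lmod X),
      act g (act f E) = act (fun a => bind g (f a)) E
}.
Arguments act {R l X Y} f E.

Section CCRLM.
Variables (R : monad) (LM : lmodule R).

(* [n] = {1,...,n} is represented by 'I_n = {0,...,n-1}: paper position k is
   the ordinal k-1. *)

(* Objects of CC(R,LM): sequences (T_1,...,T_n), T_i in LM([i-1]). *)
Inductive ctx : nat -> Type :=
| cnil : ctx 0
| csnoc n : ctx n -> LM 'I_n -> ctx n.+1.

(* Morphisms (E_1..E_m) -> (T_1..T_n): elements of R([m])^n. *)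
Definition mor (m n : nat) : Type := 'I_n -> R 'I_m.

Definition idmor n : mor n n := fun i => ret i.
Arguments idmor : clear implicits.

Definition comp m n k (g : mor n k) (f : mor m n) : mor m k :=
  fun j => bind f (g j).

Definition incl n : 'I_n -> 'I_n.+1 := widen_ord (leqnSn n).

Definition pmor n : mor n.+1 n := fun i => ret (incl i).
Arguments pmor : clear implicits.

Definition qmor m n (f : mor m n) : mor m.+1 n.+1 :=
  fun i => match unlift ord_max i with
           | Some j => bind (fun k => ret (incl k)) (f j)
           | None => ret ord_max
           end.

Record is_Csubsystem (Ob : forall n, ctx n -> Prop)
    (Hom : forall m n, ctx m -> ctx n -> mor m n -> Prop) : Prop := {
  cs_hom_src : forall m n (X : ctx m) (Y : ctx n) f, Hom m n X Y f -> Ob m X;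
  cs_hom_tgt : forall m n (X : ctx m) (Y : ctx n) f, Hom m n X Y f -> Ob n Y;
  cs_id : forall n (X : ctx n), Ob n X -> Hom n n X X (idmor n);
  cs_comp : forall m n k (X : ctx m) (Y : ctx n) (Z : ctx k) f g,
      Hom m n X Y f -> Hom n k Y Z g -> Hom m k X Z (comp g f);
  cs_pt : Ob 0 cnil;
  cs_ft : forall n (G : ctx n) T, Ob n.+1 (csnoc G T) -> Ob n G;
  cs_p : forall n (G : ctx n) T, Ob n.+1 (csnoc G T) ->
      Hom n.+1 n (csnoc G T) G (pmor n);
  cs_pull : forall n (G : ctx n) T m (Y : ctx m) (f : mor m n),
      Ob n.+1 (csnoc G T) -> Hom m n Y G f -> Ob m.+1 (csnoc Y (act f T));
  cs_q : forall n (G : ctx n) T m (Y : ctx m) (f : mor m n),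
      Ob n.+1 (csnoc G T) -> Hom m n Y G f ->
      Hom m.+1 n.+1 (csnoc Y (act f T)) (csnoc G T) (qmor f);
  (* s_f : Y -> (p_X o f)^*X, characterised by p o s_f = id, q(p_X o f, X) o s_f = f *)
  cs_s : forall n (G : ctx n) T m (Y : ctx m) (f : mor m n.+1),
      Ob n.+1 (csnoc G T) -> Hom m n.+1 Y (csnoc G T) f ->
      forall s : mor m m.+1,
        comp (pmor m) s = idmor m ->
        comp (qmor (comp (pmor n) f)) s = f ->
        Hom m m.+1 Y (csnoc Y (act (comp (pmor n) f) T)) s
}.

(* \tilde Ob(CC): sections s : ft(X) -> X in CC with p_X o s = id, identified
   with (T_1,..,T_n,T,t) where t is the last component of s. *)
Definition Obtilde (Hom : forall m n, ctx m -> ctx n -> mor m n -> Prop)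
    n (G : ctx n) (T : LM 'I_n) (t : R 'I_n) : Prop :=
  exists s : mor n n.+1,
    [/\ Hom n n.+1 G (csnoc G T) s, comp (pmor n) s = idmor n & s ord_max = t].

(* t_{n+1}: renaming i |-> i (i <= n), i |-> i+1 (i > n)  (paper, 1-indexed);
   0-indexed this is bump n. *)
Definition wkI (n m : nat) (i : 'I_m) : 'I_m.+1 := inord (bump n i).
Definition wkLM (n : nat) m (E : LM 'I_m) : LM 'I_m.+1 :=
  act (fun i => ret (wkI n i)) E.
Definition wkR (n : nat) m (r : R 'I_m) : R 'I_m.+1 :=
  bind (fun i => ret (wkI n i)) r.

(* s_{n+1}(E[s/n+1]) for E over [m+1] (m >= n):
   E(1/1,..,n/n, s/n+1, n+1/n+2, .., m/m+1), s regarded in R([m]) via [n] in [m].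
   0-indexed: i <> n |-> unbump n i, i = n |-> s. *)
Definition substI (n m : nat) (H : n <= m) (s : R 'I_n) (i : 'I_m.+1) : R 'I_m :=
  match unlift (@Ordinal m.+1 n H) i with
  | Some j => ret j
  | None => bind (fun j => ret (widen_ord H j)) s
  end.
Definition substLM n m (H : n <= m) (s : R 'I_n) (E : LM 'I_m.+1) : LM 'I_m :=
  act (substI H s) E.
Definition substR n m (H : n <= m) (s : R 'I_n) (r : R 'I_m.+1) : R 'I_m :=
  bind (substI H s) r.

(* weakctx G T Th Th'  <->  Th = (G,Delta) and Th' = (G,T,t_{n+1}(Delta))
   for some (possibly empty) Delta. *)
Inductive weakctx n (G : ctx n) (T : LM 'I_n) : forall m, ctx m -> ctx m.+1 -> Prop :=
| weak_nil : @weakctx n G T n G (csnoc G T)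
| weak_snoc m (Th : ctx m) (Th' : ctx m.+1) (D : LM 'I_m) :
    @weakctx n G T m Th Th' ->
    @weakctx n G T m.+1 (csnoc Th D) (csnoc Th' (wkLM n D)).

(* substctx G S s Th Th'  <->  Th = (G,S,Delta) and
   Th' = (G, s_{n+1}(Delta[s/n+1])) for some (possibly empty) Delta. *)
Inductive substctx n (G : ctx n) (S : LM 'I_n) (s : R 'I_n) :
    forall m, ctx m.+1 -> ctx m -> Prop :=
| subst_nil : @substctx n G S s n (csnoc G S) G
| subst_snoc m (H : n <= m) (Th : ctx m.+1) (Th' : ctx m) (D : LM 'I_m.+1) :
    @substctx n G S s m Th Th' ->
    @substctx n G S s m.+1 (csnoc Th D) (csnoc Th' (substLM H s D)).

End CCRLM.

Arguments cnil {R LM}.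

From Stdlib Require Import FunctionalExtensionality PropExtensionality.
From Pilot Require Import Defs.
From mathcomp Require Import all_boot zify.

(* Forward: conditions (4) and (5) say that terms pull back along the weakening
   and substitution morphisms, and these are iterates q(q(...(p_X))) resp.
   q(q(...(s))) of morphisms of CC; a term (section) s pulls back along any
   morphism w of CC to the section s_{s o w}.  Condition (6) is s_id.
   Backward: call f : Gamma -> (T_1,...,T_n) typed when each f_i is a term of
   type T_i(f_1,...,f_{i-1}) in Gamma.  Terms pull back along typed morphisms
   (and their q-iterates): peeling off the last component of the target is a
   substitution (5), and once the target is empty, peeling off the source is a
   weakening (4).  Hence typed morphisms compose, identities are typed by (6),
   and they form a C-subsystem whose sections are exactly the terms. *)

Set Implicit Arguments.
Unset Strict Implicit.
Unset Printing Implicit Defensive.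

Lemma lift_max_incl n (j : 'I_n) : lift ord_max j = incl j.
Proof. by apply: val_inj; apply: lift_max. Qed.

Lemma unlift_incl n (j : 'I_n) : unlift ord_max (incl j) = Some j.
Proof. by rewrite -lift_max_incl liftK. Qed.

Lemma wkI_incl n (i : 'I_n) : wkI n i = incl i.
Proof.
apply: val_inj; rewrite /= /wkI /bump leqNgt ltn_ord add0n inordK //.
exact: leqW.
Qed.

Lemma wkI_max n p : n <= p -> wkI n (ord_max : 'I_p.+1) = ord_max.
Proof. by move=> le_np; apply: val_inj; rewrite /= /wkI /bump le_np inordK. Qed.

Lemma incl_wkI n p (k : 'I_p) : n <= p -> incl (wkI n k) = wkI n (incl k).
Proof.
move=> le_np; apply: val_inj; have := ltn_ord k; rewrite /= /wkI /bump.
by case: (n <= k) => /= lt_kp; rewrite !inordK //; lia.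
Qed.

Definition wkmor (R : monad) n m : mor R m.+1 m := fun i => ret (wkI n i).
Arguments wkmor : clear implicits.

Section MonadMorphisms.
Variables (R : monad) (LM : lmodule R).

Lemma eq_bind X Y (f g : X -> R Y) r : f =1 g -> bind f r = bind g r.
Proof. by move=> /functional_extensionality ->. Qed.

Lemma eq_act X Y (f g : X -> R Y) (E : LM X) : f =1 g -> act f E = act g E.
Proof. by move=> /functional_extensionality ->. Qed.

Definition mor0 m : mor R m 0 :=
  fun i => False_rect _ (Bool.diff_false_true (ltn_ord i)).

Lemma qmor_incl m n (f : mor R m n) j : qmor f (incl j) = bind (@pmor R m) (f j).
Proof. by rewrite /qmor unlift_incl. Qed.

Lemma qmor_max m n (f : mor R m n) : qmor f ord_max = ret ord_max.
Proof. by rewrite /qmor unlift_none. Qed.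

Lemma pmor_wkmor n : @pmor R n = wkmor R n n.
Proof. by apply: functional_extensionality => i; rewrite /wkmor wkI_incl. Qed.

Lemma qmor_wkmor n p : n <= p -> qmor (wkmor R n p) = wkmor R n p.+1.
Proof.
move=> le_np; apply: functional_extensionality => i; rewrite /wkmor.
case: (unliftP ord_max i) => [j ->|->]; last by rewrite qmor_max wkI_max.
by rewrite lift_max_incl qmor_incl /pmor bind_retr incl_wkI.
Qed.

Lemma qmor_comp m n k (g : mor R n k) (f : mor R m n) :
  qmor (Defs.comp g f) = Defs.comp (qmor g) (qmor f).
Proof.
apply: functional_extensionality => i; rewrite /Defs.comp.
case: (unliftP ord_max i) => [j ->|->]; last by rewrite !qmor_max bind_retr qmor_max.
rewrite lift_max_incl !qmor_incl -!bind_bind; apply: eq_bind => l.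
by rewrite /pmor bind_retr qmor_incl.
Qed.

(* The morphism (1,...,m,t) : Gamma -> (Gamma,T), i.e. the section that the
   paper identifies with (Gamma,T,t). *)
Definition sect m (t : R 'I_m) : mor R m m.+1 :=
  fun i => if unlift ord_max i is Some j then ret j else t.

Lemma sect_max m (t : R 'I_m) : sect t ord_max = t.
Proof. by rewrite /sect unlift_none. Qed.

Lemma p_sect m (t : R 'I_m) : Defs.comp (@pmor R m) (sect t) = @idmor R m.
Proof.
apply: functional_extensionality => i.
by rewrite /Defs.comp /pmor bind_retr /sect unlift_incl.
Qed.

Lemma comp_pmor m n (f : mor R m n.+1) :
  Defs.comp (@pmor R n) f = fun i => f (incl i).
Proof. by apply: functional_extensionality => i; rewrite /Defs.comp bind_retr. Qed.

Lemma q_sect m n (f : mor R m n.+1) :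
  Defs.comp (qmor (fun i => f (incl i))) (sect (f ord_max)) = f.
Proof.
apply: functional_extensionality => i; rewrite /Defs.comp.
case: (unliftP ord_max i) => [j ->|->]; last by rewrite qmor_max bind_retr sect_max.
rewrite lift_max_incl qmor_incl -bind_bind.
rewrite (@eq_bind _ _ _ (@ret R _)) ?bind_ret // => k.
by rewrite /pmor bind_retr /sect unlift_incl.
Qed.

Lemma sect_incl m (t : R 'I_m) k : sect t (incl k) = ret k.
Proof. by rewrite /sect unlift_incl. Qed.

Lemma section_incl m (s : mor R m m.+1) k :
  Defs.comp (@pmor R m) s = @idmor R m -> s (incl k) = ret k.
Proof. by move=> /(congr1 (fun h => h k)); rewrite /Defs.comp /pmor bind_retr. Qed.

Lemma sectE m (s : mor R m m.+1) :
  Defs.comp (@pmor R m) s = @idmor R m -> s = sect (s ord_max).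
Proof.
move=> ps; apply: functional_extensionality => i; rewrite /sect.
by case: (unliftP ord_max i) => [j ->|->] //; rewrite lift_max_incl section_incl.
Qed.

Lemma substI_lift n m (H : n <= m) (s : R 'I_n) (j : 'I_m) :
  substI H s (lift (Ordinal (H : n < m.+1)) j) = ret j.
Proof. by rewrite /substI liftK. Qed.

Lemma substI_at n m (H : n <= m) (s : R 'I_n) :
  substI H s (Ordinal (H : n < m.+1)) = bind (fun j => ret (widen_ord H j)) s.
Proof. by rewrite /substI unlift_none. Qed.

Lemma substI_sect n (H : n <= n) (s : R 'I_n) : substI H s = sect s.
Proof.
apply: functional_extensionality => i; rewrite /sect.
case: (unliftP ord_max i) => [j ->|->].
  have -> : lift ord_max j = lift (Ordinal (H : n < n.+1)) j by apply: val_inj.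
  by rewrite substI_lift.
have -> : ord_max = Ordinal (H : n < n.+1) by apply: val_inj.
rewrite substI_at (@eq_bind _ _ _ (@ret R _)) ?bind_ret // => j.
by congr ret; apply: val_inj.
Qed.

Lemma substI_incl n m (H : n <= m) (H' : n <= m.+1) (s : R 'I_n) (k : 'I_m.+1) :
  substI H' s (incl k) = bind (@pmor R m) (substI H s k).
Proof.
case: (unliftP (Ordinal (H : n < m.+1)) k) => [j ->|->].
  have -> : incl (lift (Ordinal (H : n < m.+1)) j) =
            lift (Ordinal (H' : n < m.+2)) (incl j) by apply: val_inj.
  by rewrite !substI_lift bind_retr.
have -> : incl (Ordinal (H : n < m.+1)) = Ordinal (H' : n < m.+2) by apply: val_inj.
rewrite !substI_at -bind_bind; apply: eq_bind => j; rewrite bind_retr.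
by congr ret; apply: val_inj.
Qed.

Lemma qmor_substI n m (H : n <= m) (H' : n <= m.+1) (s : R 'I_n) :
  qmor (substI H s) = substI H' s.
Proof.
apply: functional_extensionality => i.
case: (unliftP ord_max i) => [j ->|->].
  by rewrite lift_max_incl qmor_incl (substI_incl H).
rewrite qmor_max; have -> : ord_max = lift (Ordinal (H' : n < m.+2)) ord_max.
  by apply: val_inj; rewrite /= /bump H.
by rewrite substI_lift.
Qed.

End MonadMorphisms.

Section QIterates.
Variables (R : monad) (LM : lmodule R).

(* [qiter X Y f P Q g]: Q = (Y,D_1,...,D_k), P = (X,f^*D_1,...) and g is the
   k-fold iterate q(...q(f,(Y,D_1))...). *)
Inductive qiter m n (X : ctx LM m) (Y : ctx LM n) (f : mor R m n) :
    forall p q, ctx LM p -> ctx LM q -> mor R p q -> Prop :=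
| qiter_nil : qiter X Y f X Y f
| qiter_snoc p q (P : ctx LM p) (Q : ctx LM q) g D :
    qiter X Y f P Q g -> qiter X Y f (csnoc P (act g D)) (csnoc Q D) (qmor g).

(* An inductive, so that inverting it identifies the indices p and q. *)
Inductive identity_mor : forall p q, ctx LM p -> ctx LM q -> mor R p q -> Prop :=
| IdentityMor p (P : ctx LM p) g : (forall i, g i = ret i) -> identity_mor P P g.

Lemma qiter_nil_identity (f : mor R 0 0) p q (P : ctx LM p) (Q : ctx LM q) g :
  qiter cnil cnil f P Q g -> identity_mor P Q g.
Proof.
elim=> [|{}p {}q {}P {}Q {}g D _ IH].
  by apply: IdentityMor => -[].
move: D; case: IH => {}p {}P {}g g_id D.
rewrite (eq_act _ g_id) act_ret; apply: IdentityMor => i.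
case: (unliftP ord_max i) => [j ->|->]; last exact: qmor_max.
by rewrite lift_max_incl qmor_incl g_id bind_retr.
Qed.

(* Peeling the last entry U off the source of a q-iterate of a morphism with
   empty target is a weakening at position m. *)
Lemma qiter_weak m (X : ctx LM m) U (f : mor R m.+1 0) p q (P : ctx LM p)
    (Q : ctx LM q) g :
  qiter (csnoc X U) cnil f P Q g ->
  match p return ctx LM p -> mor R p q -> Prop with
  | 0 => fun _ _ => False
  | p1.+1 => fun P g => exists (P1 : ctx LM p1) (g1 : mor R p1 q),
      [/\ qiter X cnil (mor0 R m) P1 Q g1, weakctx X U P1 P, m <= p1 &
          g = Defs.comp g1 (wkmor R m p1)]
  end P g.
Proof.
elim=> [|{}p {}q {}P {}Q {}g D _ IH] /=.
  exists X, (mor0 R m); split => //; [exact: qiter_nil | exact: weak_nil |].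
  by apply: functional_extensionality => -[].
case: p P g D IH => [//|p1] P g D [P1 [g1 [qit1 wk1 le_mp1 ->]]].
exists (csnoc P1 (act g1 D)), (qmor g1); split.
- exact: qiter_snoc.
- have -> : act (Defs.comp g1 (wkmor R m p1)) D = wkLM m (act g1 D).
    by rewrite /wkLM act_act.
  exact: weak_snoc.
- exact: leqW.
by rewrite -(qmor_wkmor R le_mp1) qmor_comp.
Qed.

(* Peeling the last entry T off the target of a q-iterate is a substitution of
   the last component of f. *)
Lemma qiter_subst n (Y : ctx LM n) T m (X : ctx LM m) (f : mor R m n.+1) p q
    (P : ctx LM p) (Q : ctx LM q) g :
  qiter X (csnoc Y T) f P Q g ->
  exists (P1 : ctx LM p.+1) (g1 : mor R p.+1 q),
    [/\ qiter X Y (fun i => f (incl i)) P1 Q g1,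
        substctx X (act (fun i => f (incl i)) T) (f ord_max) P1 P, m <= p &
        forall H : m <= p, g = Defs.comp g1 (substI H (f ord_max))].
Proof.
elim=> [|{}p {}q {}P {}Q {}g D _ [P1 [g1 [qit1 sub1 le_mp g_subst]]]].
  exists (csnoc X (act (fun i => f (incl i)) T)), (qmor (fun i => f (incl i))).
  split=> //; [exact: (qiter_snoc _ (qiter_nil _ _ _)) | exact: subst_nil |].
  by move=> H; rewrite substI_sect q_sect.
exists (csnoc P1 (act g1 D)), (qmor g1); split.
- exact: qiter_snoc.
- have -> : act g D = substLM le_mp (f ord_max) (act g1 D).
    by rewrite /substLM act_act (g_subst le_mp).
  exact: subst_snoc.
- exact: leqW.
by move=> H; rewrite (g_subst le_mp) -(qmor_substI le_mp H) qmor_comp.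
Qed.

Lemma weakctx_le n (G : ctx LM n) T m (Th : ctx LM m) Th' :
  weakctx G T Th Th' -> n <= m.
Proof. by elim=> // m' *; apply: leqW. Qed.

End QIterates.

Section TypedMorphisms.
Variables (R : monad) (LM : lmodule R).
Unset Implicit Arguments.
Variables (C : forall n, ctx LM n -> Prop)
  (Ct : forall n, ctx LM n -> LM 'I_n -> R 'I_n -> Prop).
Set Implicit Arguments.
Hypothesis C_pt : C 0 cnil.
Hypothesis C_ft : forall n (G : ctx LM n) T, C n.+1 (csnoc G T) -> C n G.
Hypothesis C_snoc_Ct : forall n (G : ctx LM n) A a, Ct n G A a -> C n.+1 (csnoc G A).
Hypothesis Ct_weak : forall n (G : ctx LM n) T m (Th : ctx LM m) (Th' : ctx LM m.+1) A a,
  C n.+1 (csnoc G T) -> weakctx G T Th Th' -> Ct m Th A a ->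
  Ct m.+1 Th' (wkLM n A) (wkR n a).
Hypothesis Ct_subst : forall n (G : ctx LM n) S s m (H : n <= m)
  (Th : ctx LM m.+1) (Th' : ctx LM m) A a,
  Ct n G S s -> substctx G S s Th Th' -> Ct m.+1 Th A a ->
  Ct m Th' (substLM H s A) (substR H s a).
Hypothesis Ct_var : forall n (G : ctx LM n) T, C n.+1 (csnoc G T) ->
  Ct n.+1 (csnoc G T) (wkLM n T) (ret ord_max).

Fixpoint typed m (X : ctx LM m) n (Y : ctx LM n) : mor R m n -> Prop :=
  match Y in ctx _ n return mor R m n -> Prop with
  | cnil => fun _ => True
  | csnoc _ Y' T => fun f => typed X Y' (fun i => f (incl i)) /\
      Ct m X (act (fun i => f (incl i)) T) (f ord_max)
  end.

Definition typed_hom m n (X : ctx LM m) (Y : ctx LM n) (f : mor R m n) : Prop :=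
  [/\ C m X, C n Y & typed X Y f].

Lemma eq_typed m (X : ctx LM m) n (Y : ctx LM n) f g :
  f =1 g -> typed X Y f -> typed X Y g.
Proof. by move=> /functional_extensionality ->. Qed.

Lemma Ct_C n (G : ctx LM n) A a : Ct n G A a -> C n G.
Proof. by move/C_snoc_Ct/C_ft. Qed.

Lemma Ct_weak_last m (X : ctx LM m) U A a : C m.+1 (csnoc X U) -> Ct m X A a ->
  Ct m.+1 (csnoc X U) (act (@pmor R m) A) (bind (@pmor R m) a).
Proof.
move=> XU_C /(Ct_weak XU_C (weak_nil X U)).
by rewrite /wkLM /wkR -/(wkmor R m m) -pmor_wkmor.
Qed.

Lemma typed_weak n (Y : ctx LM n) m (X : ctx LM m) U f :
  C m.+1 (csnoc X U) -> typed X Y f ->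
  typed (csnoc X U) Y (Defs.comp f (@pmor R m)).
Proof.
move=> XU_C; elim: Y f => [//|n' Y' IH T] f /= [f_typed f_last].
split; first exact: IH.
by have := Ct_weak_last XU_C f_last; rewrite act_act.
Qed.

Lemma typed_id n (X : ctx LM n) : C n X -> typed X X (@idmor R n).
Proof.
elim: X => [//|n' X' IH U] XU_C /=; split.
  apply: eq_typed (typed_weak XU_C (IH (C_ft XU_C))) => i.
  by rewrite /Defs.comp bind_retr.
by have := Ct_var XU_C; rewrite /wkLM -/(wkmor R n' n') -pmor_wkmor.
Qed.

Lemma Ct_qiter n (Y : ctx LM n) m (X : ctx LM m) f : C m X -> typed X Y f ->
  forall p q (P : ctx LM p) (Q : ctx LM q) g, qiter X Y f P Q g ->
  forall A a, Ct q Q A a -> Ct p P (act g A) (bind g a).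
Proof.
elim: Y m X f => [|n' Y' IHY T] m X f.
  elim: X f => [|m' X' IHX U] f X_C _ p q P Q g qit.
    move: (qiter_nil_identity qit) => {qit}; case=> {}p {}P {}g g_id A a.
    by rewrite (eq_act _ g_id) (eq_bind _ g_id) act_ret bind_ret.
  move: (qiter_weak qit) => {qit}; case: p P g => [//|p1] P g /=.
  case=> P1 [g1 [qit1 wk1 _ ->]] A a HA.
  have := Ct_weak X_C wk1 (IHX (mor0 R m') (C_ft X_C) I _ _ _ _ _ qit1 _ _ HA).
  by rewrite /wkLM /wkR act_act -bind_bind.
move=> X_C /= [f_typed f_last] p q P Q g qit A a HA.
have [P1 [g1 [qit1 sub1 le_mp ->]]] := qiter_subst qit.
have := Ct_subst le_mp f_last sub1 (IHY _ _ _ X_C f_typed _ _ _ _ _ qit1 _ _ HA).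
by rewrite /substLM /substR act_act -bind_bind.
Qed.

Lemma typed_comp k (Z : ctx LM k) n (Y : ctx LM n) m (X : ctx LM m) f g :
  C m X -> typed X Y f -> typed Y Z g -> typed X Z (Defs.comp g f).
Proof.
move=> X_C f_typed; elim: Z g => [//|k' Z' IH T] g /= [g_typed g_last].
split; first exact: IH.
by have := Ct_qiter X_C f_typed (qiter_nil X Y f) g_last; rewrite act_act.
Qed.

Lemma typed_p n (G : ctx LM n) T : C n.+1 (csnoc G T) ->
  typed (csnoc G T) G (@pmor R n).
Proof.
move=> GT_C; apply: eq_typed (typed_weak GT_C (typed_id (C_ft GT_C))) => i.
by rewrite /Defs.comp bind_retr.
Qed.

Lemma C_pull n (G : ctx LM n) T m (Y : ctx LM m) (f : mor R m n) :
  C n.+1 (csnoc G T) -> typed_hom Y G f -> C m.+1 (csnoc Y (act f T)).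
Proof.
move=> GT_C [Y_C _ f_typed].
exact: Ct_C (Ct_qiter Y_C f_typed (qiter_snoc T (qiter_nil Y G f)) (Ct_var GT_C)).
Qed.

Lemma typed_q n (G : ctx LM n) T m (Y : ctx LM m) (f : mor R m n) :
  C n.+1 (csnoc G T) -> typed_hom Y G f ->
  typed (csnoc Y (act f T)) (csnoc G T) (qmor f).
Proof.
move=> GT_C f_hom; have YfT_C := C_pull GT_C f_hom.
case: f_hom => _ _ f_typed /=; split.
  by apply: eq_typed (typed_weak YfT_C f_typed) => i; rewrite qmor_incl.
rewrite qmor_max (eq_act _ (qmor_incl f)) -act_act.
by have := Ct_var YfT_C; rewrite /wkLM -/(wkmor R m m) -pmor_wkmor.
Qed.

Lemma typed_sect m (X : ctx LM m) T t : C m X -> Ct m X T t ->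
  typed X (csnoc X T) (sect t).
Proof.
move=> X_C Tt /=; rewrite sect_max (eq_act _ (@sect_incl R m t)) act_ret.
by split=> //; apply: eq_typed (typed_id X_C) => i; rewrite sect_incl.
Qed.

Lemma typed_Csubsystem : is_Csubsystem C typed_hom.
Proof.
split.
- by move=> m n X Y f [].
- by move=> m n X Y f [].
- by move=> n X X_C; split=> //; apply: typed_id.
- move=> m n k X Y Z f g [X_C Y_C f_typed] [_ Z_C g_typed]; split=> //.
  exact: typed_comp f_typed g_typed.
- exact: C_pt.
- exact: C_ft.
- by move=> n G T GT_C; split=> //; [exact: C_ft GT_C | exact: typed_p].
- exact: C_pull.
- by move=> n G T m Y f GT_C f_hom; split; [exact: C_pull f_hom | | exact: typed_q].
move=> n G T m Y f GT_C [Y_C _ f_typed] s ps qs.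
have [_ f_last] := f_typed.
have s_last : s ord_max = f ord_max.
  by rewrite -qs /Defs.comp qmor_max bind_retr.
rewrite (sectE ps) s_last comp_pmor.
split=> //; last exact: typed_sect.
exact: C_snoc_Ct f_last.
Qed.

Lemma Obtilde_typed n (G : ctx LM n) T t : Obtilde typed_hom G T t <-> Ct n G T t.
Proof.
split=> [[s [[_ _ [_ Tt]] ps <-]] | Tt].
  by move: Tt; rewrite (eq_act _ (fun i => section_incl i ps)) act_ret.
exists (sect t); split; [|exact: p_sect|exact: sect_max].
by split; [exact: Ct_C Tt | exact: C_snoc_Ct Tt | exact: typed_sect (Ct_C Tt) Tt].
Qed.

End TypedMorphisms.

Section CsubsystemRules.
Variables (R : monad) (LM : lmodule R).
Unset Implicit Arguments.
Variables (Ob : forall n, ctx LM n -> Prop)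
  (Hom : forall m n, ctx LM m -> ctx LM n -> mor R m n -> Prop).
Set Implicit Arguments.
Hypothesis CC : is_Csubsystem Ob Hom.

Lemma Obtilde_Ob n (G : ctx LM n) A a : Obtilde Hom G A a -> Ob n G.
Proof. by case=> s [s_hom _ _]; apply: (cs_hom_src CC s_hom). Qed.

Lemma Obtilde_Ob_snoc n (G : ctx LM n) A a :
  Obtilde Hom G A a -> Ob n.+1 (csnoc G A).
Proof. by case=> s [s_hom _ _]; apply: (cs_hom_tgt CC s_hom). Qed.

Lemma Hom_sect n (G : ctx LM n) T m (Y : ctx LM m) (f : mor R m n.+1) :
  Ob n.+1 (csnoc G T) -> Hom m n.+1 Y (csnoc G T) f ->
  Hom m m.+1 Y (csnoc Y (act (fun i => f (incl i)) T)) (sect (f ord_max)).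
Proof.
move=> GT_Ob f_hom; have := cs_s CC GT_Ob f_hom (p_sect (f ord_max)).
by rewrite comp_pmor; apply; apply: q_sect.
Qed.

(* The term a pulls back along w to the last component of s_{s o w}. *)
Lemma Obtilde_pull m (Th : ctx LM m) A a p (Th' : ctx LM p) (w : mor R p m) :
  Obtilde Hom Th A a -> Hom p m Th' Th w -> Obtilde Hom Th' (act w A) (bind w a).
Proof.
case=> s [s_hom ps <-] w_hom.
have sw_incl : (fun i => Defs.comp s w (incl i)) = w.
  apply: functional_extensionality => i.
  by rewrite /Defs.comp (section_incl i ps) bind_retr.
have := Hom_sect (cs_hom_tgt CC s_hom) (cs_comp CC w_hom s_hom).
rewrite sw_incl => sw_hom.
by exists (sect (Defs.comp s w ord_max)); split; [|exact: p_sect|exact: sect_max].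
Qed.

Lemma Hom_weak n (G : ctx LM n) T m (Th : ctx LM m) Th' :
  weakctx G T Th Th' -> Ob n.+1 (csnoc G T) -> Ob m Th ->
  Hom m.+1 m Th' Th (wkmor R n m).
Proof.
elim=> [|m' Th1 Th1' D wk1 IH] GT_Ob Th_Ob.
  by rewrite -pmor_wkmor; exact: (cs_p CC GT_Ob).
have := cs_q CC Th_Ob (IH GT_Ob (cs_ft CC Th_Ob)).
by rewrite (qmor_wkmor R (weakctx_le wk1)).
Qed.

Lemma Hom_subst n (G : ctx LM n) S s m (Th : ctx LM m.+1) Th' :
  substctx G S s Th Th' -> Obtilde Hom G S s -> Ob m.+1 Th ->
  forall H : n <= m, Hom m m.+1 Th' Th (substI H s).
Proof.
elim=> [|m' H' Th1 Th1' D sub1 IH] GSs Th_Ob H.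
  by case: GSs => s0 [s0_hom ps0 <-]; rewrite substI_sect -(sectE ps0).
have := cs_q CC Th_Ob (IH GSs (cs_ft CC Th_Ob) H').
by rewrite (qmor_substI H' H).
Qed.

Lemma Obtilde_weak n (G : ctx LM n) T m (Th : ctx LM m) (Th' : ctx LM m.+1) A a :
  Ob n.+1 (csnoc G T) -> weakctx G T Th Th' -> Obtilde Hom Th A a ->
  Obtilde Hom Th' (wkLM n A) (wkR n a).
Proof.
move=> GT_Ob wk HA.
exact: Obtilde_pull HA (Hom_weak wk GT_Ob (Obtilde_Ob HA)).
Qed.

Lemma Obtilde_subst n (G : ctx LM n) S s m (H : n <= m)
    (Th : ctx LM m.+1) (Th' : ctx LM m) A a :
  Obtilde Hom G S s -> substctx G S s Th Th' -> Obtilde Hom Th A a ->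
  Obtilde Hom Th' (substLM H s A) (substR H s a).
Proof.
move=> GSs sub HA.
exact: Obtilde_pull HA (Hom_subst sub GSs (Obtilde_Ob HA) H).
Qed.

Lemma Obtilde_var n (G : ctx LM n) T :
  Ob n.+1 (csnoc G T) -> Obtilde Hom (csnoc G T) (wkLM n T) (ret ord_max).
Proof.
move=> GT_Ob; have := Hom_sect GT_Ob (cs_id CC GT_Ob).
rewrite -/(@pmor R n) pmor_wkmor => s_hom.
by exists (sect (ret ord_max)); split; [|exact: p_sect|exact: sect_max].
Qed.

End CsubsystemRules.

Theorem proposition4p1 (R : monad) (LM : lmodule R)
    (C : forall n, ctx LM n -> Prop)
    (Ct : forall n, ctx LM n -> LM 'I_n -> R 'I_n -> Prop) :
  (exists (Ob : forall n, ctx LM n -> Prop)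
          (Hom : forall m n, ctx LM m -> ctx LM n -> mor R m n -> Prop),
      [/\ is_Csubsystem Ob Hom,
          (forall n (G : ctx LM n), Ob n G <-> C n G) &
          (forall n (G : ctx LM n) T t, Obtilde Hom G T t <-> Ct n G T t)])
  <->
  ((* (1) *) C 0 cnil /\
      (* (2) *) (forall n (G : ctx LM n) T, C n.+1 (csnoc G T) -> C n G) /\
      (* (3) *) (forall n (G : ctx LM n) A a, Ct n G A a -> C n.+1 (csnoc G A)) /\
      (* (4) *) (forall n (G : ctx LM n) T m (Th : ctx LM m) (Th' : ctx LM m.+1) A a,
                   C n.+1 (csnoc G T) -> weakctx G T Th Th' -> Ct m Th A a ->
                   Ct m.+1 Th' (wkLM n A) (wkR n a)) /\
      (* (5) *) (forall n (G : ctx LM n) S s m (H : n <= m)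
                   (Th : ctx LM m.+1) (Th' : ctx LM m) A a,
                   Ct n G S s -> substctx G S s Th Th' -> Ct m.+1 Th A a ->
                   Ct m Th' (substLM H s A) (substR H s a)) /\
      (* (6) *) (forall n (G : ctx LM n) T, C n.+1 (csnoc G T) ->
                   Ct n.+1 (csnoc G T) (wkLM n T) (ret ord_max))).
Proof.
split=> [[Ob [Hom [CC Ob_C Obtilde_Ct]]] |
          [C_pt [C_ft [C_snoc_Ct [Ct_weak [Ct_subst Ct_var]]]]]].
  have <- : Ob = C.
    apply: functional_extensionality_dep => n; apply: functional_extensionality => G.
    exact/propositional_extensionality/Ob_C.
  have <- : (fun n => @Obtilde R LM Hom n) = Ct.
    apply: functional_extensionality_dep => n; apply: functional_extensionality => G.
    apply: functional_extensionality => T; apply: functional_extensionality => t.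
    exact/propositional_extensionality/Obtilde_Ct.
  split; first exact: (cs_pt CC).
  split; first exact: (cs_ft CC).
  split; first exact: (Obtilde_Ob_snoc CC).
  split; first exact: (Obtilde_weak CC).
  split; [exact: (Obtilde_subst CC) | exact: (Obtilde_var CC)].
exists C, (typed_hom C Ct); split=> //.
  exact: typed_Csubsystem.
exact: Obtilde_typed.
Qed.
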